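(* Let $Q\in\mathbb{R}^{n\times n}$ be symmetric positive definite with $Q_{i,i}=1$ for all $i$, whose support graph is a connected tree, and let $c,\lambda\in\mathbb{R}^n$ with $\lambda_i>0$ for all $i$. Then for every node $u\in\{1,\dots,n\}$ there exist functions $p_{u,s}:\mathbb{R}\to\mathbb{R}$, indexed by $s\in\{0,1\}^{n_u-1}$, each of which is a strongly convex quadratic function (i.e. $p_{u,s}(\alpha)=a\alpha^2+b\alpha+d$ with $a>0$), such that for all $\alpha\in\mathbb{R}$, $$f_u(\alpha)=\min_{s\in\{0,1\}^{n_u-1}} p_{u,s}(\alpha)+\lambda_u\mathbb{1}_{\alpha}.$$
   Context: The support graph $\mathrm{supp}(Q)$ of a symmetric $Q\in\mathbb{R}^{n\times n}$ is the undirected graph on $\{1,\dots,n\}$ with edge $\{i,j\}$ ($i\neq j$) iff $Q_{i,j}\neq 0$. The tree is rooted at node $n$ and nodes are labeled topologically: every non-root node $u$ has a unique neighbor $\mathrm{child}(u)$ on its path to the root, and $u<\mathrm{child}(u)$; $\mathrm{par}(u)=\{v:\mathrm{child}(v)=u\}$. $\mathrm{supp}_u(Q)$ is the subtree consisting of $u$ and all nodes whose path to the root passes through $u$; $n_u$ is its number of nodes (so $u$ is the largest label in it). $Q_{[u]}$, $c_{[u]}$, $\lambda_{[u]}$ are the restrictions of $Q,c,\lambda$ to the index set of $\mathrm{supp}_u(Q)$. $\mathbb{1}_\alpha$ equals $0$ if $\alpha=0$ and $1$ otherwise. The parametric cost at node $u$ is $$f_u(\alpha)=\min_{x\in\mathbb{R}^{n_u},\,z\in\{0,1\}^{n_u}}\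 \tfrac12 x^\top Q_{[u]}x+c_{[u]}^\top x+\lambda_{[u]}^\top z\ \ \text{s.t. } x_i(1-z_i)=0\ \forall i,\ \ x_u=\alpha,$$ where $x_u$ denotes the coordinate of $x$ corresponding to node $u$. *)

From HB Require Import structures.
From mathcomp Require Import all_boot all_order all_algebra.
From mathcomp Require Import boolp classical_sets reals.
Set Implicit Arguments. Unset Strict Implicit. Unset Printing Implicit Defensive.
Import Order.TTheory GRing.Theory Num.Theory.
Local Open Scope ring_scope.

Section Defs.
Variable R : realType.
Variable m : nat.
(* The paper's n is m.+1; nodes 1..n are 'I_m.+1 = {0..m}; the root (node n) is ord_max. *)
Implicit Types (Q : 'M[R]_m.+1).

Definition root : 'I_m.+1 := ord_max.

Definition supp_adj Q : rel 'I_m.+1 := fun i j => (i != j) && (Q i j != 0).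

Definition graph_connected Q := forall i j : 'I_m.+1, connect (supp_adj Q) i j.

Definition graph_acyclic Q :=
  forall c : seq 'I_m.+1, (3 <= size c)%N -> ~ ucycle (supp_adj Q) c.

Definition is_tree Q := graph_connected Q /\ graph_acyclic Q.

(* v belongs to supp_u(Q): the path from v to the root passes through u
   (in a tree: every walk from v to the root visits u) *)
Definition in_subtree Q (u v : 'I_m.+1) : Prop :=
  forall p : seq 'I_m.+1, path (supp_adj Q) v p -> last v p = root -> u \in v :: p.

Definition topological_labels Q :=
  forall u v : 'I_m.+1, in_subtree Q u v -> (v <= u)%N.

Definition subtree Q (u : 'I_m.+1) : {set 'I_m.+1} :=
  [set v | `[< in_subtree Q u v >] ].

Definition obj_u Q (c lam : 'I_m.+1 -> R) (u : 'I_m.+1)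
    (x : 'I_m.+1 -> R) (z : 'I_m.+1 -> bool) : R :=
  2^-1 * (\sum_(i in subtree Q u) \sum_(j in subtree Q u) x i * Q i j * x j)
  + \sum_(i in subtree Q u) c i * x i
  + \sum_(i in subtree Q u) lam i * (z i)%:R.

Definition feasible_u Q (u : 'I_m.+1) (alpha : R)
    (x : 'I_m.+1 -> R) (z : 'I_m.+1 -> bool) : Prop :=
  (forall i, i \in subtree Q u -> x i * (1 - (z i)%:R) = 0) /\ x u = alpha.

(* f_u(alpha) : the minimum (taken as infimum) of the objective over feasible (x,z) *)
Definition f_u Q (c lam : 'I_m.+1 -> R) (u : 'I_m.+1) (alpha : R) : R :=
  inf [set t | exists x z, feasible_u Q u alpha x z /\ t = obj_u Q c lam u x z].

Definition indic (alpha : R) : R := (alpha != 0)%:R.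

Definition n_u Q (u : 'I_m.+1) : nat := #|subtree Q u|.

End Defs.

From HB Require Import structures.
From mathcomp Require Import all_boot all_order all_algebra.
From mathcomp Require Import classical_sets reals boolp ring lra.
Import Order.TTheory GRing.Theory Num.Theory.
Set Implicit Arguments. Unset Strict Implicit. Unset Printing Implicit Defensive.
Local Open Scope ring_scope.

(* Fix the set T of nodes of supp_u(Q) other than u on which z = 1.  Minimising
   the positive definite quadratic part of the objective over the x supported on
   T + u with x_u = alpha is an equality-constrained strictly convex problem: its
   minimiser is affine in alpha (obtained by solving the rows of Q indexed by T),
   so its value is a strongly convex quadratic in alpha.  Adding the penalty
   lambda(T) and minimising over the finitely many T gives f_u, up to the term
   lambda_u 1_alpha contributed by z_u. *)

Section QuadraticForm.
Variables (R : realFieldType) (n : nat) (Q : 'M[R]_n) (c : 'I_n -> R).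
Hypothesis Q_sym : Q^T = Q.
Hypothesis Q_pd : forall x : 'cV[R]_n, x != 0 -> 0 < (x^T *m Q *m x) ord0 ord0.
Variable U : {set 'I_n}.

Lemma Q_symE i j : Q i j = Q j i.
Proof. by rewrite -[in LHS]Q_sym mxE. Qed.

Definition qform (x : 'I_n -> R) :=
  \sum_(i in U) \sum_(j in U) x i * Q i j * x j.

Definition quad (x : 'I_n -> R) := 2^-1 * qform x + \sum_(i in U) c i * x i.

Lemma qform_mx (x : 'I_n -> R) :
  let v := \col_i (if i \in U then x i else 0) in
  qform x = (v^T *m Q *m v) ord0 ord0.
Proof.
rewrite /= mxE; under eq_bigr do rewrite mxE mulr_suml.
rewrite exchange_big /qform big_mkcond /=; apply: eq_bigr => i _; rewrite !mxE.
case: (i \in U); last by rewrite big1 // => j _; rewrite !mul0r.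
by rewrite big_mkcond; apply: eq_bigr => j _; rewrite !mxE; case: (j \in U); rewrite ?mulr0.
Qed.

Lemma qform_ge0 (x : 'I_n -> R) : 0 <= qform x.
Proof.
rewrite qform_mx; set v := \col__ _.
have [->|v_nz] := eqVneq v 0; first by rewrite mulmx0 mxE.
exact/ltW/Q_pd.
Qed.

Lemma qform_gt0 (x : 'I_n -> R) i : i \in U -> x i != 0 -> 0 < qform x.
Proof.
move=> iU xi_nz; rewrite qform_mx; apply: Q_pd; apply: contra xi_nz => /eqP v0.
by have := congr1 (fun v : 'cV[R]_n => v i ord0) v0; rewrite !mxE iU => ->.
Qed.

Lemma qformD (x y : 'I_n -> R) : qform (fun i => x i + y i) =
  qform x + 2 * (\sum_(i in U) y i * \sum_(j in U) Q i j * x j) + qform y.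
Proof.
have yQx : \sum_(i in U) \sum_(j in U) y i * Q i j * x j =
    \sum_(i in U) y i * \sum_(j in U) Q i j * x j.
  by apply: eq_bigr => i _; rewrite mulr_sumr; apply: eq_bigr => j _; rewrite mulrA.
have xQy : \sum_(i in U) \sum_(j in U) x i * Q i j * y j =
    \sum_(i in U) y i * \sum_(j in U) Q i j * x j.
  rewrite exchange_big; apply: eq_bigr => i _; rewrite mulr_sumr.
  by apply: eq_bigr => j _; rewrite (Q_symE j i); ring.
have split_sq i : \sum_(j in U) (x i + y i) * Q i j * (x j + y j) =
    \sum_(j in U) x i * Q i j * x j + \sum_(j in U) x i * Q i j * y j
  + \sum_(j in U) y i * Q i j * x j + \sum_(j in U) y i * Q i j * y j.
  by rewrite -!big_split /=; apply: eq_bigr => j _; ring.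
rewrite /qform (eq_bigr _ (fun i _ => split_sq i)) !big_split /= xQy yQx; ring.
Qed.

Lemma qformZ (a : R) (x : 'I_n -> R) : qform (fun i => a * x i) = a ^+ 2 * qform x.
Proof.
rewrite /qform mulr_sumr; apply: eq_bigr => i _; rewrite mulr_sumr.
by apply: eq_bigr => j _; ring.
Qed.

Lemma quadD (x y : 'I_n -> R) : quad (fun i => x i + y i) =
  quad x + \sum_(i in U) y i * (\sum_(j in U) Q i j * x j + c i) + 2^-1 * qform y.
Proof.
rewrite /quad qformD.
have -> : \sum_(i in U) c i * (x i + y i) =
    \sum_(i in U) c i * x i + \sum_(i in U) c i * y i.
  by rewrite -big_split /=; apply: eq_bigr => i _; ring.
have -> : \sum_(i in U) y i * (\sum_(j in U) Q i j * x j + c i) =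
    \sum_(i in U) y i * (\sum_(j in U) Q i j * x j) + \sum_(i in U) c i * y i.
  by rewrite -big_split /=; apply: eq_bigr => i _; ring.
by field.
Qed.

Section Pinned.
Variables (T : {set 'I_n}) (u : 'I_n).
Hypotheses (uU : u \in U) (TU : T \subset U) (uNT : u \notin T).

Definition pin_mx : 'M[R]_n :=
  \matrix_(i, j) if i \in T then (if j \in T then Q i j else 0) else (i == j)%:R.

Lemma pin_mx_out (y : 'cV[R]_n) i : i \notin T -> (pin_mx *m y) i ord0 = y i ord0.
Proof.
move=> iNT; rewrite mxE (bigD1 i) //= mxE (negbTE iNT) eqxx mul1r big1 ?addr0 //.
by move=> j ji; rewrite mxE (negbTE iNT) eq_sym (negbTE ji) mul0r.
Qed.

Lemma pin_mx_in (y : 'cV[R]_n) i : i \in T ->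
  (forall j, j \notin T -> y j ord0 = 0) ->
  (pin_mx *m y) i ord0 = \sum_j Q i j * y j ord0.
Proof.
move=> iT y_out; rewrite mxE; apply: eq_bigr => j _; rewrite mxE iT.
by case: (boolP (j \in T)) => jT //; rewrite y_out // !mulr0.
Qed.

Lemma pin_mx_unit : pin_mx \in unitmx.
Proof.
rewrite -unitmx_tr -row_free_unit; apply: inj_row_free => v hv.
have {hv} : pin_mx *m v^T = 0 by rewrite -[pin_mx]trmxK -trmx_mul hv trmx0.
set y := v^T => hy.
have y_out i : i \notin T -> y i ord0 = 0.
  move=> iNT; have := congr1 (fun w : 'cV[R]_n => w i ord0) hy.
  by rewrite pin_mx_out // => ->; rewrite mxE.
have Qy_in i : i \in T -> (Q *m y) i ord0 = 0.
  move=> iT; have := congr1 (fun w : 'cV[R]_n => w i ord0) hy.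
  by rewrite pin_mx_in // => h; rewrite mxE h mxE.
have qy0 : (y^T *m Q *m y) ord0 ord0 = 0.
  rewrite -mulmxA mxE big1 // => i _; rewrite mxE.
  by case: (boolP (i \in T)) => iT; [rewrite Qy_in // mulr0 | rewrite y_out // mul0r].
have [y0|y_nz] := eqVneq y 0; first by rewrite -[v]trmxK -/y y0 trmx0.
by have := @Q_pd y y_nz; rewrite qy0 ltxx.
Qed.

Definition pin_rhs (f : 'I_n -> R) : 'cV[R]_n := \col_i (if i \in T then - f i else 0).

Definition pin_sol f := invmx pin_mx *m pin_rhs f.

Lemma pin_sol_out f i : i \notin T -> pin_sol f i ord0 = 0.
Proof.
move=> iNT; have := congr1 (fun w : 'cV[R]_n => w i ord0) (mulKVmx pin_mx_unit (pin_rhs f)).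
by rewrite pin_mx_out // => ->; rewrite mxE (negbTE iNT).
Qed.

Lemma pin_sol_in f i : i \in T -> \sum_j Q i j * pin_sol f j ord0 = - f i.
Proof.
move=> iT; have := congr1 (fun w : 'cV[R]_n => w i ord0) (mulKVmx pin_mx_unit (pin_rhs f)).
by rewrite pin_mx_in // => [|j]; [rewrite mxE iT | exact: pin_sol_out].
Qed.

Definition pin_base (i : 'I_n) : R := pin_sol c i ord0.
Definition pin_dir (i : 'I_n) : R := (i == u)%:R + pin_sol (fun i => Q i u) i ord0.
Definition pin_argmin (a : R) (i : 'I_n) : R := pin_base i + a * pin_dir i.

Lemma pin_argmin_u a : pin_argmin a u = a.
Proof. by rewrite /pin_argmin /pin_base /pin_dir !pin_sol_out // eqxx add0r addr0 mulr1. Qed.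

Lemma pin_argmin_out a i : i \notin T -> i != u -> pin_argmin a i = 0.
Proof.
by move=> iNT iu; rewrite /pin_argmin /pin_base /pin_dir !pin_sol_out // (negbTE iu) add0r addr0 mulr0.
Qed.

Lemma pin_argmin_grad a i : i \in T -> \sum_(j in U) Q i j * pin_argmin a j + c i = 0.
Proof.
move=> iT.
have -> : \sum_(j in U) Q i j * pin_argmin a j = \sum_j Q i j * pin_argmin a j.
  rewrite big_mkcond; apply: eq_bigr => j _; case: (boolP (j \in U)) => jU //.
  have jNT : j \notin T := contra (fintype.subsetP TU j) jU.
  have ju : j != u by apply: contraNneq jU => ->.
  by rewrite pin_argmin_out ?mulr0.
rewrite (eq_bigr (fun j => Q i j * pin_sol c j ord0 + a * (Q i j * (j == u)%:R)
   + a * (Q i j * pin_sol (fun i => Q i u) j ord0))); last first.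
  by move=> j _; rewrite /pin_argmin /pin_base /pin_dir; ring.
rewrite !big_split /= -!mulr_sumr !pin_sol_in //.
rewrite (bigD1 u) //= eqxx mulr1 big1 ?addr0; first ring.
by move=> j /negbTE ->; rewrite mulr0.
Qed.

(* The gradient vanishes on T, so [quadD] leaves only the nonnegative
   quadratic term of the deviation. *)
Lemma quad_pin_argmin_le a (x : 'I_n -> R) : x u = a ->
  (forall i, i \in U -> i \notin T -> i != u -> x i = 0) ->
  quad (pin_argmin a) <= quad x.
Proof.
move=> xu x_out.
have -> : x = (fun i => pin_argmin a i + (x i - pin_argmin a i)).
  by apply: funext => i; rewrite addrC subrK.
rewrite quadD big1 ?addr0; last first.
  move=> i iU; case: (boolP (i \in T)) => iT; first by rewrite pin_argmin_grad // mulr0.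
  have [->|iu] := eqVneq i u; first by rewrite xu pin_argmin_u subrr mul0r.
  by rewrite x_out // pin_argmin_out // subrr mul0r.
by rewrite lerDl mulr_ge0 ?qform_ge0 // invr_ge0 ler0n.
Qed.

Definition pin_a := 2^-1 * qform pin_dir.
Definition pin_b := \sum_(i in U) pin_dir i * (\sum_(j in U) Q i j * pin_base j)
   + \sum_(i in U) c i * pin_dir i.
Definition pin_d := quad pin_base.

Lemma quad_pin_argmin a : quad (pin_argmin a) = pin_a * a ^+ 2 + pin_b * a + pin_d.
Proof.
rewrite /pin_argmin (quadD pin_base (fun i => a * pin_dir i)) qformZ.
have -> : \sum_(i in U) a * pin_dir i * (\sum_(j in U) Q i j * pin_base j + c i) =
    a * pin_b.
  by rewrite /pin_b -big_split mulr_sumr /=; apply: eq_bigr => i _; ring.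
rewrite /pin_a /pin_d; ring.
Qed.

Lemma pin_a_gt0 : 0 < pin_a.
Proof.
rewrite mulr_gt0 ?invr_gt0 ?ltr0n // (@qform_gt0 pin_dir u uU) //.
by rewrite /pin_dir pin_sol_out // eqxx addr0 oner_eq0.
Qed.

End Pinned.
End QuadraticForm.

Lemma inf_attained (R : realType) (S : set R) t :
  S t -> (forall s, S s -> t <= s) -> inf S = t.
Proof.
move=> St t_lb; apply/le_anti/andP; split; first by apply: ge_inf St; exists t.
by apply: lb_le_inf; [exists t | exact: t_lb].
Qed.

Lemma sum_indicator_split (R : ringType) (n : nat) (lam : 'I_n -> R)
    (U T : {set 'I_n}) (u : 'I_n) (z : 'I_n -> bool) :
  u \in U -> (forall i, i \in U :\ u -> z i = (i \in T)) -> T \subset U :\ u ->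
  \sum_(i in U) lam i * (z i)%:R = lam u * (z u)%:R + \sum_(i in T) lam i.
Proof.
move=> uU zT TA; rewrite (bigD1 u) //=; congr (_ + _).
rewrite big_mkcond [RHS]big_mkcond; apply: eq_bigr => i _ /=.
case: (boolP (i \in T)) => iT.
  have iA := fintype.subsetP TA _ iT; move: (iA); rewrite !inE => /andP [-> ->].
  by rewrite zT // iT mulr1.
case: (boolP ((i \in U) && (i != u))) => // iA.
by rewrite zT ?(negbTE iT) ?mulr0 // !inE andbC.
Qed.

Lemma subtree_self (R : realType) (m : nat) (Q : 'M[R]_m.+1) u : u \in subtree Q u.
Proof. by rewrite inE; apply/asboolP => p _ _; exact: mem_head. Qed.

Section ParametricCost.
Variables (R : realType) (m : nat) (Q : 'M[R]_m.+1) (c lam : 'I_m.+1 -> R).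
Hypothesis Q_sym : Q^T = Q.
Hypothesis Q_pd : forall x : 'cV[R]_m.+1, x != 0 -> 0 < (x^T *m Q *m x) ord0 ord0.
Hypothesis lam_gt0 : forall i, 0 < lam i.
Variable u : 'I_m.+1.

Let U := subtree Q u.
Let A := U :\ u.

Lemma obj_u_quad x z :
  obj_u Q c lam u x z = quad Q c U x + \sum_(i in U) lam i * (z i)%:R.
Proof. by []. Qed.

Definition pin_value (T : {set 'I_m.+1}) (a : R) :=
  quad Q c U (pin_argmin Q c T u a) + \sum_(i in T) lam i.

Lemma obj_u_ge_pin_value a x z : feasible_u Q u a x z ->
  pin_value [set i in A | z i] a + lam u * indic a <= obj_u Q c lam u x z.
Proof.
move=> [x_supp xu]; set T := [set i in A | z i].
have TA : T \subset A by apply/fintype.subsetP => i; rewrite inE => /andP [].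
have TU : T \subset U := fintype.subset_trans TA (subD1set U u).
have uNT : u \notin T by rewrite !inE eqxx.
have x_out i : i \in U -> ~~ z i -> x i = 0.
  by move=> iU zi; have := x_supp i iU; rewrite (negbTE zi) subr0 mulr1.
have quad_le : quad Q c U (pin_argmin Q c T u a) <= quad Q c U x.
  apply: (quad_pin_argmin_le c Q_sym Q_pd (subtree_self Q u) TU uNT xu).
  move=> i iU iNT iu; apply: x_out => //.
  by apply: (contraNN _ iNT) => zi; rewrite inE in_setD1 iu iU zi.
have indic_le : lam u * indic a <= lam u * (z u)%:R.
  rewrite /indic; apply: ler_wpM2l; first exact: ltW.
  rewrite ler_nat.
  case: (boolP (z u)) => zu; first exact: leq_b1.
  by rewrite -xu x_out ?subtree_self ?eqxx.
have lam_sum : \sum_(i in U) lam i * (z i)%:R = lam u * (z u)%:R + \sum_(i in T) lam i.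
  by apply: sum_indicator_split (subtree_self Q u) _ TA => i iA; rewrite inE iA.
rewrite obj_u_quad lam_sum /pin_value; lra.
Qed.

Lemma pin_value_feasible (T : {set 'I_m.+1}) a : T \subset A ->
  exists x z, feasible_u Q u a x z /\
    obj_u Q c lam u x z = pin_value T a + lam u * indic a.
Proof.
move=> TA; have TU : T \subset U := fintype.subset_trans TA (subD1set U u).
have uNT : u \notin T by apply: contra (fintype.subsetP TA u) _; rewrite in_setD1 eqxx.
pose z i := (i \in T) || ((i == u) && (a != 0)).
exists (pin_argmin Q c T u a), z; split; first split.
- move=> i _; rewrite /z; case: (boolP (i \in T)) => iT /=; first by rewrite subrr mulr0.
  have [->|iu] := eqVneq i u; last by rewrite (pin_argmin_out _ Q_pd) // mul0r.
  rewrite (pin_argmin_u _ Q_pd) //=; have [->|] := eqVneq a 0; first by rewrite mul0r.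
  by rewrite subrr mulr0.
- exact: pin_argmin_u.
have lam_sum : \sum_(i in U) lam i * (z i)%:R = lam u * (z u)%:R + \sum_(i in T) lam i.
  apply: sum_indicator_split (subtree_self Q u) _ TA => i.
  by rewrite in_setD1 /z => /andP [/negbTE -> _]; rewrite andFb orbF.
rewrite obj_u_quad lam_sum /z (negbTE uNT) eqxx /pin_value /indic /=; ring.
Qed.

Lemma f_u_pin_value_min (T0 : {set 'I_m.+1}) a : T0 \subset A ->
  (forall T : {set 'I_m.+1}, T \subset A -> pin_value T0 a <= pin_value T a) ->
  f_u Q c lam u a = pin_value T0 a + lam u * indic a.
Proof.
move=> T0A T0_min; apply: inf_attained.
  have [x [z [feas obj]]] := pin_value_feasible a T0A.
  by exists x, z.
move=> _ [x [z [feas ->]]]; apply: le_trans (obj_u_ge_pin_value feas).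
by rewrite lerD2r T0_min //; apply/fintype.subsetP => i; rewrite inE => /andP [].
Qed.

End ParametricCost.

Section SubsetsAsBitvectors.
Variables (T : finType) (A : {set T}) (k : nat) (eqk : k = #|A|).

Definition set_of_bits (s : {ffun 'I_k -> bool}) : {set T} :=
  [set enum_val (cast_ord eqk i) | i in [pred i | s i]].

Lemma set_of_bits_sub s : set_of_bits s \subset A.
Proof. by apply/fintype.subsetP => v /imsetP [i _ ->]; exact: enum_valP. Qed.

Lemma set_of_bits_onto (B : {set T}) : B \subset A -> exists s, set_of_bits s = B.
Proof.
move=> BA; exists [ffun i => enum_val (cast_ord eqk i) \in B].
apply/setP => v; apply/imsetP/idP => [[i]|vB].
  by rewrite inE /= ffunE => ? ->.
have vA := fintype.subsetP BA v vB.
exists (cast_ord (esym eqk) (enum_rank_in vA v)); last by rewrite cast_ordKV enum_rankK_in.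
by rewrite inE /= ffunE cast_ordKV enum_rankK_in.
Qed.

End SubsetsAsBitvectors.

Theorem lemma1 (R : realType) (m : nat) (Q : 'M[R]_m.+1) (c lam : 'I_m.+1 -> R) :
  Q^T = Q ->
  (forall x : 'cV[R]_m.+1, x != 0 -> 0 < (x^T *m Q *m x) ord0 ord0) ->
  (forall i, Q i i = 1) ->
  is_tree Q ->
  topological_labels Q ->
  (forall i, 0 < lam i) ->
  forall u : 'I_m.+1,
  exists a b d : {ffun 'I_(n_u Q u).-1 -> bool} -> R,
    (forall s, 0 < a s) /\
    forall alpha : R,
      exists2 s0 : {ffun 'I_(n_u Q u).-1 -> bool},
        (forall s, a s0 * alpha ^+ 2 + b s0 * alpha + d s0
                   <= a s * alpha ^+ 2 + b s * alpha + d s) &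
        f_u Q c lam u alpha
          = a s0 * alpha ^+ 2 + b s0 * alpha + d s0 + lam u * indic alpha.
Proof.
move=> Q_sym Q_pd _ _ _ lam_gt0 u.
set U := subtree Q u; set A := U :\ u.
have uU : u \in U := subtree_self Q u.
have eqk : (n_u Q u).-1 = #|A| by rewrite /n_u -/U (cardsD1 u U) uU.
pose Ts := set_of_bits eqk.
have uNTs s : u \notin Ts s.
  by apply: contra (fintype.subsetP (set_of_bits_sub eqk s) u) _; rewrite in_setD1 eqxx.
exists (fun s => pin_a Q U (Ts s) u), (fun s => pin_b Q c U (Ts s) u),
  (fun s => pin_d Q c U (Ts s) + \sum_(i in Ts s) lam i).
split=> [s|a]; first exact: (pin_a_gt0 Q_pd uU (uNTs s)).
pose p s := pin_value Q c lam u (Ts s) a.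
have p_poly s : p s = pin_a Q U (Ts s) u * a ^+ 2 + pin_b Q c U (Ts s) u * a
    + (pin_d Q c U (Ts s) + \sum_(i in Ts s) lam i).
  by rewrite /p /pin_value quad_pin_argmin //; ring.
have [s0 _ s0_min] := @arg_minP _ _ _ [ffun=> false] xpredT p isT.
exists s0 => [s|]; first by rewrite -!p_poly s0_min.
rewrite -(p_poly s0) /p (f_u_pin_value_min Q_sym Q_pd lam_gt0 (set_of_bits_sub eqk s0)) //.
by move=> T /(set_of_bits_onto eqk) [s <-]; exact: s0_min.
Qed.
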